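(* Let $p\ge 5$ be a prime with $p\equiv 5\pmod 6$, $K$ a field of characteristic $p$, and let $c_2(r)\in\mathbb F_p[r]$ be the coefficient of $x^{2p-1}y^{p-1}z^{p-2}$ in $(x^3z+y^4+ry^2z^2+z^4)^{p-1}$. Then $c_2(r)$ has a root $r\in\overline K$ with $r\neq 0,\pm 2$ if and only if $p\ge 17$. *)

From HB Require Import structures.
From mathcomp Require Import all_boot all_order all_algebra all_field.
Set Implicit Arguments. Unset Strict Implicit. Unset Printing Implicit Defensive.
Import GRing.Theory.
Local Open Scope ring_scope.

(* c2 R p : {poly R} (variable r) is the coefficient of x^(2p-1) y^(p-1) z^(p-2)
   in (x^3 z + y^4 + r y^2 z^2 + z^4)^(p-1), computed in the iterated polynomial
   ring R[r][z][y][x] (outermost variable x, then y, then z, coefficients in R[r]). *)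
Definition c2 (R : comNzRingType) (p : nat) : {poly R} :=
  let x : {poly {poly {poly {poly R}}}} := 'X in
  let y : {poly {poly {poly {poly R}}}} := ('X : {poly {poly {poly R}}})%:P in
  let z : {poly {poly {poly {poly R}}}} := (('X : {poly {poly R}})%:P)%:P in
  let r : {poly {poly {poly {poly R}}}} := ((('X : {poly R})%:P)%:P)%:P in
  let F := (x ^+ 3 * z + y ^+ 4 + r * y ^+ 2 * z ^+ 2 + z ^+ 4) ^+ p.-1 in
  ((F`_(2 * p - 1))`_p.-1)`_(p - 2).

From HB Require Import structures.
From mathcomp Require Import all_boot all_order all_algebra all_field.
From mathcomp Require Import ring zify.
Set Implicit Arguments. Unset Strict Implicit. Unset Printing Implicit Defensive.
Import GRing.Theory.
Local Open Scope ring_scope.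

(* Write p = 6k + 5.  Expanding the power, c_2(r) is the sum over i of
   C(p-1, 4k+3) C(2k+1, i) C(i, 3k+2-i) r^(2i-3k-2), so c_2(r) = r^e h(r^2)
   where e is the parity of k and h has degree j = k/2 with all coefficients
   binomial products of numbers below p, hence nonzero in K.  For p < 17,
   j = 0 and r = 0 is the only possible root.  For p >= 17 the roots of h are
   nonzero; they cannot all equal 4, since h = lc (X - 4)^j would force
   h_(j-1) + 4 j h_j = 0, and this quantity is, up to units, 2 j (3k + 3 + e).
   A square root of a root of h other than 4 is then a root r != 0, 2, -2. *)

Lemma coef_binomial (R : comNzRingType) (a b : R) d n t : (0 < d)%N ->
  ((a%:P + b *: 'X^d) ^+ n)`_(d * t) = a ^+ (n - t) * b ^+ t *+ 'C(n, t).
Proof.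
move=> d_gt0; rewrite exprDn.
under eq_bigr => i _ do
  rewrite exprZn -exprM -polyC_exp -scalerAr mul_polyC scalerA scalerMnl.
rewrite coef_sumMXn; under eq_bigl => i do rewrite andTb eqn_pmul2l //.
rewrite (big_ord1_eq _ (fun i => b ^+ i * a ^+ (n - i) *+ 'C(n, i))) ltnS mulrC.
by case: leqP => // /bin_small ->; rewrite mulr0n.
Qed.

Lemma coef_biquadratic_expr (R : comNzRingType) (c d : R) m N : (m <= N)%N ->
  ((c%:P + 'X^2 * (d%:P + 'X^2)) ^+ m)`_(2 * N)
  = \sum_(i < m.+1) c ^+ (m - i) * d ^+ (2 * i - N) *+ ('C(m, i) * 'C(i, N - i)).
Proof.
move=> le_mN; rewrite exprDn coef_sum; apply: eq_bigr => i _.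
have le_iN : (i <= N)%N by rewrite (leq_trans _ le_mN) // -ltnS.
rewrite coefMn -polyC_exp coefCM exprMn -exprM coefXnM ltn_mul2l /= ltnNge le_iN /=.
rewrite -mulnBr -[X in _ + X]scale1r coef_binomial // expr1n mulr1.
by rewrite mulrnAr -mulrnA mulnC (_ : i - (N - i) = 2 * i - N)%N //; lia.
Qed.

Definition c2_coef (k i : nat) : nat :=
  'C(6 * k + 4, 4 * k + 3) * 'C(2 * k + 1, i) * 'C(i, 3 * k + 2 - i).

Lemma c2E (R : comNzRingType) k : c2 R (6 * k + 5) =
  \sum_(i < (2 * k + 1).+1) (c2_coef k i)%:R *: 'X^(2 * i - (3 * k + 2)).
Proof.
rewrite /c2 /=.
set Z : {poly {poly R}} := 'X; set r : {poly {poly R}} := ('X : {poly R})%:P.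
set W : {poly {poly {poly R}}} := (Z ^+ 4)%:P + 'X^2 * ((r * Z ^+ 2)%:P + 'X^2).
rewrite (_ : _ + _ + _ + _ = W%:P + Z%:P *: 'X^3); last by rewrite -mul_polyC /W; ring.
rewrite (_ : (6 * k + 5).-1 = 2 * (3 * k + 2))%N; last by lia.
rewrite (_ : 2 * (6 * k + 5) - 1 = 3 * (4 * k + 3))%N; last by lia.
rewrite coef_binomial // coefMn -polyC_exp coefMC.
rewrite (_ : 2 * (3 * k + 2) - (4 * k + 3) = 2 * k + 1)%N; last by lia.
rewrite coef_biquadratic_expr; last by lia.
rewrite (_ : 6 * k + 5 - 2 = 6 * k + 3)%N; last by lia.
set N := (3 * k + 2)%N.
have termE (i : 'I_(2 * k + 1).+1) :
    Z ^+ 4 ^+ (2 * k + 1 - i) * (r * Z ^+ 2) ^+ (2 * i - N)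
      *+ ('C(2 * k + 1, i) * 'C(i, N - i)) * Z ^+ (4 * k + 3) *+ 'C(2 * N, 4 * k + 3)
    = ((c2_coef k i)%:R *: 'X^(2 * i - N))%:P * Z ^+ (6 * k + 3).
  rewrite /c2_coef -/N; case: (ltnP (2 * i) N) => le_Ni.
    rewrite (@bin_small i); last by lia.
    by rewrite !muln0 mulr0n mul0r mul0rn scale0r mul0r.
  have -> : Z ^+ (6 * k + 3)
      = Z ^+ (4 * (2 * k + 1 - i)) * Z ^+ (2 * (2 * i - N)) * Z ^+ (4 * k + 3).
    by rewrite -!exprD; congr (_ ^+ _); have := ltn_ord i; rewrite /N; lia.
  rewrite scaler_nat polyCMn polyC_exp -/r [(r * _) ^+ _]exprMn !exprM.
  by rewrite (_ : 2 * N = 6 * k + 4)%N; [ring | rewrite /N; lia].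
rewrite mulr_suml -sumrMnl (eq_bigr _ (fun i _ => termE i)).
by rewrite -mulr_suml -rmorph_sum coefMXn ltnn subnn coefC.
Qed.

(* Only the terms of c2E with 2 * i >= 3 * k + 2, i.e. i >= 2 * k + 1 - k./2,
   survive, and their exponents of r all have the parity of k. *)
Definition c2_red (R : nzSemiRingType) k : {poly R} :=
  \poly_(t < (k./2).+1) (c2_coef k (2 * k + 1 - k./2 + t))%:R.

Lemma horner_c2 (R : comNzRingType) k (r : R) :
  (c2 R (6 * k + 5)).[r] = r ^+ odd k * (c2_red R k).[r ^+ 2].
Proof.
have k_eq : (k = (k./2).*2 + odd k)%N by rewrite addnC odd_double_half.
set i0 := (2 * k + 1 - k./2)%N.
pose F i := (c2_coef k i)%:R * r ^+ (2 * i - (3 * k + 2)).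
have low_terms : \sum_(0 <= i < i0) F i = 0.
  rewrite big_nat big1 // => i /andP[_ lt_i0].
  by rewrite /F /c2_coef (@bin_small i) ?muln0 ?mul0r //; rewrite /i0 in lt_i0; lia.
rewrite c2E horner_sum horner_poly mulr_sumr.
under eq_bigr do rewrite hornerZ hornerXn -/(F _).
rewrite -(big_mkord xpredT F) (big_cat_nat _ (n := i0)) /=; try lia.
rewrite low_terms add0r -{1}[i0]add0n big_addn big_mkord.
rewrite (_ : (2 * k + 1).+1 - i0 = (k./2).+1)%N; last by lia.
apply: eq_bigr => t _; rewrite /F mulrCA -exprM -exprD addnC.
by congr (_ * _ ^+ _); lia.
Qed.

Lemma prime_ndvd_fact p n : prime p -> (n < p)%N -> ~~ (p %| n`!)%N.
Proof.
move=> p_pr; elim: n => [|n IHn] lt_np; first by rewrite dvdn1 neq_ltn prime_gt1 ?orbT.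
by rewrite factS Euclid_dvdM // negb_or gtnNdvd // IHn // ltnW.
Qed.

Lemma prime_ndvd_bin p n t : prime p -> (n < p)%N -> (t <= n)%N -> ~~ (p %| 'C(n, t))%N.
Proof.
move=> p_pr lt_np le_tn; have := prime_ndvd_fact p_pr lt_np; apply: contraNN => dvd_bin.
by rewrite -(bin_fact le_tn) dvdn_mulr.
Qed.

Lemma prime_ndvd_c2_coef k i : prime (6 * k + 5) ->
  (3 * k + 2 <= 2 * i)%N -> (i <= 2 * k + 1)%N -> ~~ (6 * k + 5 %| c2_coef k i)%N.
Proof.
move=> p_pr le_Ni le_im.
by rewrite !Euclid_dvdM // !negb_or !prime_ndvd_bin //; lia.
Qed.

Lemma c2_coef_top k c : ((k + 2) * (c2_coef k (2 * k) + c * c2_coef k (2 * k + 1))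
  = c2_coef k (2 * k + 1) * (k * (k - 1) + c * (k + 2)))%N.
Proof.
have bin_top : (k.+2 * ((2 * k).+1 * 'C(2 * k, k.+2))
    = 'C((2 * k).+1, k.+1) * (k * (k - 1)))%N.
  rewrite mul_bin_diag mul_bin_left mulnCA mul_bin_left.
  rewrite (_ : (2 * k).+1 - k.+2 = k - 1)%N; last by lia.
  by rewrite (_ : (2 * k).+1 - k.+1 = k)%N; [ring | lia].
rewrite /c2_coef (_ : 3 * k + 2 - 2 * k = k.+2)%N; last by lia.
rewrite (_ : 3 * k + 2 - (2 * k + 1) = k.+1)%N; last by lia.
set B := 'C(6 * k + 4, 4 * k + 3); rewrite !addn1 binSn binn muln1 mulnDr.
rewrite (_ : (k + 2) * (B * (2 * k).+1 * 'C(2 * k, k.+2))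
           = B * (k.+2 * ((2 * k).+1 * 'C(2 * k, k.+2))))%N.
  by rewrite bin_top; ring.
by rewrite addn2; ring.
Qed.

Section PositiveCharacteristic.

Variables (R : nzRingType) (k : nat).
Hypothesis charR : (6 * k + 5)%N \in [pchar R].

Let p_prime : prime (6 * k + 5) := pcharf_prime charR.
Let k_eq : (k = (k./2).*2 + odd k)%N. Proof. by rewrite addnC odd_double_half. Qed.

Lemma coef_c2_red_neq0 t : (t <= k./2)%N -> (c2_red R k)`_t != 0.
Proof.
move=> le_tj; rewrite coef_poly ltnS le_tj -(dvdn_pcharf charR).
by apply: prime_ndvd_c2_coef => //; lia.
Qed.

Lemma size_c2_red : size (c2_red R k) = (k./2).+1.
Proof.
by have := coef_c2_red_neq0 (leqnn _); rewrite coef_poly ltnSn; apply: size_poly_eq.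
Qed.

Lemma c2_red_subleading_neq0 : (2 <= k)%N ->
  (c2_red R k)`_(k./2).-1 + 4%:R *+ k./2 * (c2_red R k)`_(k./2) != 0.
Proof.
move=> k_ge2; set j := k./2.
rewrite !coef_poly ltnS leq_pred ltnS leqnn.
rewrite (_ : 2 * k + 1 - j + j.-1 = 2 * k)%N; last by lia.
rewrite (_ : 2 * k + 1 - j + j = 2 * k + 1)%N; last by lia.
rewrite -mulrnA -natrM -natrD -(dvdn_pcharf charR).
apply/negP => dvd_sum; have := dvdn_mull (k + 2) dvd_sum.
rewrite c2_coef_top Euclid_dvdM // (negbTE (prime_ndvd_c2_coef _ _ _)) //; try lia.
rewrite (_ : k * (k - 1) + 4 * j * (k + 2) = 2 * j * (3 * k + 3 + odd k))%N; last first.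
  by move: k_eq; rewrite -/j; case: (odd k) => /= ->; nia.
by rewrite !Euclid_dvdM // !gtnNdvd //; lia.
Qed.

End PositiveCharacteristic.

Lemma closed_field_root_neq (K : closedFieldType) (h : {poly K}) (a : K) n :
  size h = n.+1 -> (0 < n)%N -> h`_n.-1 + a *+ n * h`_n != 0 ->
  exists2 z, root h z & z != a.
Proof.
move=> size_h n_gt0 h_sub; have [rs h_eq] := closed_field_poly_normal h.
have lc_neq0 : lead_coef h != 0 by rewrite lead_coef_eq0 -size_poly_eq0 size_h.
have size_rs : size rs = n.
  by move: size_h; rewrite h_eq size_scale // size_prod_XsubC => -[].
have [/all_pred1P rs_eq | /allPn[z z_rs z_neq_a]] := boolP (all (pred1 a) rs).
  have lcE : lead_coef h = h`_n by rewrite lead_coefE size_h.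
  case/eqP: h_sub; rewrite -lcE {1}h_eq coefZ -size_rs.
  rewrite coefPn_prod_XsubC ?size_rs -?lt0n // rs_eq big_nseq iter_addr_0 size_rs.
  by rewrite mulrN mulrC addNr.
by exists z; rewrite // h_eq rootZ // root_prod_XsubC.
Qed.

Theorem proposition3p4 (p : nat) (K : closedFieldType) :
  prime p -> (5 <= p)%N -> (p %% 6 = 5)%N -> p \in [pchar K] ->
  ((exists r : K, root (c2 K p) r /\ r != 0 /\ r != 2%:R /\ r != - 2%:R)
   <-> (17 <= p)%N).
Proof.
move=> _ _ p_mod6; have -> : p = (6 * (p %/ 6) + 5)%N.
  by rewrite {1}(divn_eq p 6) p_mod6 mulnC.
move: (p %/ 6)%N => k charK.
have k_eq : (k = (k./2).*2 + odd k)%N by rewrite addnC odd_double_half.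
have h0_neq0 := coef_c2_red_neq0 charK (leq0n _).
split.
  case=> r [c2r [r_neq0 _]]; rewrite leqNgt; apply/negP => lt_p17.
  have size_h : (size (c2_red K k) <= 1)%N by rewrite size_c2_red // ltnS; lia.
  move: c2r; rewrite /root horner_c2 (size1_polyC size_h) hornerC.
  by rewrite mulf_eq0 expf_eq0 (negbTE r_neq0) andbF (negbTE h0_neq0).
move=> p_ge17; have k_ge2 : (2 <= k)%N by lia.
have [|z hz z_neq4] := closed_field_root_neq (size_c2_red charK) _
  (c2_red_subleading_neq0 charK k_ge2); first by lia.
have z_neq0 : z != 0 by apply: contraTneq hz => ->; rewrite rootE horner_coef0.
have [r r2z] : exists r : K, r ^+ 2 = z.
  have [r] : exists r, root ('X^2 - z%:P) r by apply/closed_rootP; rewrite size_XnsubC.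
  by rewrite rootE !hornerE subr_eq0 => /eqP; exists r.
exists r; split; first by rewrite /root horner_c2 r2z (rootP hz) mulr0.
split; [|split].
- by apply: contra_neq z_neq0 => r0; rewrite -r2z r0 expr0n.
- by apply: contra_neq z_neq4 => r2; rewrite -r2z r2 -natrX.
- by apply: contra_neq z_neq4 => r2; rewrite -r2z r2 sqrrN -natrX.
Qed.
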